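(* Let $(X,\pi)$ be a finite symmetric two-player game with relative payoff game $(X,\Delta)$. If $(X,\Delta)$ has no pure saddle point, then imitation is subject to a money pump.
   Context: A symmetric two-player game $(X,\pi)$ has common action set $X$ and payoff $\pi:X\times X\to\mathbb{R}$ ($\pi(x,y)$ = payoff of the player choosing $x$ against $y$). Relative payoff: $\Delta(x,y)=\pi(x,y)-\pi(y,x)$; $(X,\Delta)$ is a zero-sum game where player 1 choosing $x$ against $y$ gets $\Delta(x,y)$. A pure saddle point is $(x^*,y^* )$ with $\Delta(x,y^* )\le\Delta(x^*,y^* )\le\Delta(x^*,y)$ for all $x,y\in X$. Imitate-the-best: given initial $y_0\in X$ and any opponent sequence $(x_t)_{t\ge0}$, $y_t=x_{t-1}$ if $\Delta(x_{t-1},y_{t-1})>0$ and $y_t=y_{t-1}$ otherwise. Imitation is not subject to a money pump if there is $M\in\mathbb{R}_+$ such that for every $y_0\in X$ and every sequence $(x_t)$, $\limsup_{T\to\infty}\sum_{t=0}^T\Delta(x_t,y_t)\le M$; otherwise it is subject to a money pump. *)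

From HB Require Import structures.
From mathcomp Require Import all_boot all_order all_algebra.
From mathcomp Require Import all_classical all_reals all_analysis.
Set Implicit Arguments. Unset Strict Implicit. Unset Printing Implicit Defensive.
Import Order.TTheory GRing.Theory Num.Theory.
Local Open Scope ring_scope.

Definition rel_payoff {R : realType} {X : Type} (pi : X -> X -> R) (x y : X) : R :=
  pi x y - pi y x.

Definition pure_saddle_point {R : realType} {X : Type} (pi : X -> X -> R) (xs ys : X) : Prop :=
  forall x y : X, rel_payoff pi x ys <= rel_payoff pi xs ys /\
                  rel_payoff pi xs ys <= rel_payoff pi xs y.

Fixpoint imitate {R : realType} {X : Type} (pi : X -> X -> R) (y0 : X) (xs : nat -> X) (t : nat) : X :=
  match t with
  | 0 => y0
  | t'.+1 => let y := imitate pi y0 xs t' in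
             if 0 < rel_payoff pi (xs t') y then xs t' else y
  end.

Definition pump_sum {R : realType} {X : Type} (pi : X -> X -> R) (y0 : X) (xs : nat -> X) (T : nat) : R :=
  \sum_(0 <= t < T.+1) rel_payoff pi (xs t) (imitate pi y0 xs t).

Definition no_money_pump {R : realType} {X : Type} (pi : X -> X -> R) : Prop :=
  exists M : R, 0 <= M /\
    forall (y0 : X) (xs : nat -> X),
      (limn_esup (fun T => (pump_sum pi y0 xs T)%:E) <= M%:E)%E.

Definition money_pump {R : realType} {X : Type} (pi : X -> X -> R) : Prop :=
  ~ no_money_pump pi.

From HB Require Import structures.
From mathcomp Require Import all_boot all_order all_algebra.
From mathcomp Require Import all_classical all_reals all_analysis.
Set Implicit Arguments. Unset Strict Implicit. Unset Printing Implicit Defensive.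
Import Order.TTheory GRing.Theory Num.Theory.
Local Open Scope classical_set_scope.
Local Open Scope ring_scope.

(** Without a pure saddle point every action y is strictly beaten by some
    action b y, and on a finite action set the gains Delta(b y, y) are bounded
    below by some eps > 0. An opponent who always plays the action beating the
    current imitator action is then imitated at every round, so it gains at
    least eps per round and the cumulative relative payoff diverges. *)

Lemma cvgr_idnMr (R : realType) (eps : R) :
  0 < eps -> (n%:R * eps) @[n --> \oo] --> +oo.
Proof.
move=> eps0; apply/cvgryPge => A.
have /cvgryPge/(_ (A / eps)) := @cvgr_idn R.
by apply: filterS => n; rewrite ler_pdivrMr.
Qed.

Lemma limn_esup_cvgy (R : realType) (u : (\bar R)^nat) :
  u @ \oo --> +oo%E -> limn_esup u = +oo%E.
Proof. by move=> /cvgy_esups/cvg_lim; rewrite limn_esup_lim => ->. Qed.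

Section Imitation.
Variables (R : realType) (X : Type) (pi : X -> X -> R).

Lemma rel_payoffxx x : rel_payoff pi x x = 0.
Proof. exact: subrr. Qed.

Lemma rel_payoff_antisym x y : rel_payoff pi x y = - rel_payoff pi y x.
Proof. by rewrite /rel_payoff opprB. Qed.

Lemma pure_saddle_point_diag y :
  (forall x, rel_payoff pi x y <= 0) -> pure_saddle_point pi y y.
Proof.
move=> unbeaten x z; rewrite rel_payoffxx unbeaten.
by rewrite rel_payoff_antisym oppr_ge0 unbeaten.
Qed.

Lemma no_saddle_point_beaten :
  ~ (exists xs ys : X, pure_saddle_point pi xs ys) ->
  forall y, exists x, 0 < rel_payoff pi x y.
Proof.
move=> nosaddle y; apply/not_existsP => unbeaten; apply: nosaddle.
by exists y, y; apply: pure_saddle_point_diag => x; rewrite leNgt; apply/negP.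
Qed.

Lemma imitate_iter (b : X -> X) y0 :
  (forall y, 0 < rel_payoff pi (b y) y) ->
  forall t, imitate pi y0 (fun s => b (iter s b y0)) t = iter t b y0.
Proof. by move=> beats; elim=> [//|t /= ->]; rewrite beats. Qed.

Lemma pump_sum_ge_natmul y0 xs (eps : R) :
  (forall t, eps <= rel_payoff pi (xs t) (imitate pi y0 xs t)) ->
  forall T, T.+1%:R * eps <= pump_sum pi y0 xs T.
Proof.
move=> gain T; rewrite /pump_sum big_mkord.
have -> : T.+1%:R * eps = \sum_(t < T.+1) eps by rewrite sumr_const card_ord mulr_natl.
by apply: ler_sum.
Qed.

Lemma money_pump_of_uniform_gain y0 xs (eps : R) :
  0 < eps ->
  (forall t, eps <= rel_payoff pi (xs t) (imitate pi y0 xs t)) ->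
  money_pump pi.
Proof.
move=> eps0 /pump_sum_ge_natmul gain [M [_ bounded]].
suff pinfty : limn_esup (fun T => (pump_sum pi y0 xs T)%:E) = +oo%E.
  by have := bounded y0 xs; rewrite pinfty leye_eq.
apply/limn_esup_cvgy/cvgeryP/(@ger_cvgy _ _ _ _ (fun n => n%:R * eps)); last exact: cvgr_idnMr.
by near=> T; apply: le_trans (gain T); rewrite ler_pM2r // ler_nat.
Unshelve. all: by end_near.
Qed.

End Imitation.

Lemma beaten_uniformly (R : realType) (X : finType) (x0 : X) (pi : X -> X -> R) :
  (forall y, exists x, 0 < rel_payoff pi x y) ->
  exists b : X -> X, exists2 eps, 0 < eps & forall y, eps <= rel_payoff pi (b y) y.
Proof.
move=> /choice[b beats]; exists b.
pose gain y := rel_payoff pi (b y) y.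
exists (gain (Order.arg_min x0 xpredT gain)); first exact: beats.
by move=> y; case: Order.TotalTheory.arg_minP => // m _; apply.
Qed.

Theorem proposition1 (R : realType) (X : finType) (x0 : X) (pi : X -> X -> R) :
  ~ (exists xs ys : X, pure_saddle_point pi xs ys) -> money_pump pi.
Proof.
move=> /no_saddle_point_beaten/(beaten_uniformly x0)[b [eps eps0 gain]].
have beats y : 0 < rel_payoff pi (b y) y by apply: lt_le_trans (gain y).
apply: (@money_pump_of_uniform_gain _ _ _ x0 (fun t => b (iter t b x0)) _ eps0) => t.
rewrite imitate_iter //; exact: gain.
Qed.
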